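(* Let $h:\mathbb{R}^p\times[t_0,t_f)\to\mathbb{R}$ be continuously differentiable with $\frac{\partial}{\partial \mathbf{p}}h(\mathbf{p},t)\neq \mathbf{0}$ whenever $h(\mathbf{p},t)=0$. Suppose that at every $(\mathbf{p},t)$ with $\frac{\partial}{\partial \mathbf{p}}h(\mathbf{p},t)=\mathbf{0}$ and $h(\mathbf{p},t)>0$ we have $\frac{\partial h(\mathbf{p},t)}{\partial t}\ge 0$. Then $h$ is a CBF for the system $\dot{\mathbf{p}}=\mathbf{f}(\mathbf{p})+\mathbf{G}(\mathbf{p})\mathbf{z}$, and this holds with an arbitrary choice of the associated extended class-$\mathcal{K}_\infty$ function $\alpha$.
   Context: Agent model (first-order): $\dot{\mathbf{p}}=\mathbf{f}(\mathbf{p})+\mathbf{G}(\mathbf{p})\mathbf{z}$ with state $\mathbf{p}\in\mathbb{R}^p$, input $\mathbf{z}\in\mathbb{R}^z$, $\mathbf{f}:\mathbb{R}^p\to\mathbb{R}^p$ and $\mathbf{G}:\mathbb{R}^p\to\mathbb{R}^{p\times z}$ locally Lipschitz, and $\mathbf{G}(\mathbf{p})$ of full row rank for every $\mathbf{p}$. A continuous $\alpha:\mathbb{R}\to\mathbb{R}$ is an extended class-$\mathcal{K}_\infty$ function if it is strictly increasing, $\alpha(0)=0$, and $\lim_{s\to\pm\infty}\alpha(s)=\pm\infty$. A set-valued flow $\mathcal{D}:[t_0,t_f)\rightrightarrows\mathbb{R}^p$ has graph $\mathcal{G}(\mathcal{D})=\{(\mathbf{p},t):t\in[t_0,t_f),\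 \mathbf{p}\in\mathcal{D}(t)\}$. CBF definition: given a continuously differentiable $h:\mathbb{R}^p\times[t_0,t_f)\to\mathbb{R}$ with $\frac{\partial}{\partial\mathbf{p}}h\neq\mathbf{0}$ whenever $h=0$, let $\mathcal{C}(t)=\{\mathbf{p}:h(\mathbf{p},t)\ge0\}$. Then $h$ is a (zeroing) control barrier function (CBF) for the system if there exist a set-valued flow $\mathcal{D}$ with $\mathcal{C}(t)\subseteq\mathcal{D}(t)$ for all $t$ and an extended class-$\mathcal{K}_\infty$ function $\alpha$ such that for all $(\mathbf{p},t)\in\mathcal{G}(\mathcal{D})$, $\sup_{\mathbf{z}\in\mathbb{R}^z}\dot h(\mathbf{p},t,\mathbf{z})>-\alpha(h(\mathbf{p},t))$, where $\dot h(\mathbf{p},t,\mathbf{z})=\frac{\partial h}{\partial\mathbf{p}}(\mathbf{p},t)\big(\mathbf{f}(\mathbf{p})+\mathbf{G}(\mathbf{p})\mathbf{z}\big)+\frac{\partial h}{\partial t}(\mathbf{p},t)$. *)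

From HB Require Import structures.
From mathcomp Require Import all_boot all_order all_algebra.
From mathcomp Require Import all_classical all_reals all_analysis.

Set Implicit Arguments.
Unset Strict Implicit.
Unset Printing Implicit Defensive.

Import Order.TTheory GRing.Theory Num.Theory.
Import numFieldNormedType.Exports.

Local Open Scope classical_set_scope.
Local Open Scope ring_scope.

Section Defs.
Variable R : realType.

Definition ext_classKinf (alpha : R -> R) : Prop :=
  [/\ continuous alpha,
      (forall x y : R, x < y -> alpha x < alpha y),
      alpha 0 = 0,
      alpha x @[x --> +oo] --> +oo &
      alpha x @[x --> -oo] --> -oo].

Definition locally_lipschitz (V W : normedModType R) (F : V -> W) : Prop :=
  forall x : V, exists2 r : R, 0 < r & exists L : R,
    forall y y' : V, `|y - x| < r -> `|y' - x| < r ->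
      `|F y - F y'| <= L * `|y - y'|.

Variable n m : nat. (* state dimension p = n, input dimension z = m *)

Definition time_dom (t0 : R) (tf : \bar R) : set R :=
  [set t | t0 <= t /\ (t%:E < tf)%E].

Definition dom (t0 : R) (tf : \bar R) : set ('cV[R]_n * R) :=
  [set x | time_dom t0 tf x.2].

Definition C1_on (h : 'cV[R]_n * R -> R) (S : set ('cV[R]_n * R)) : Prop :=
  (forall x, S x -> differentiable h x) /\
  (forall v : 'cV[R]_n * R, {within S, continuous (fun x => 'd h x v)}).

Definition grad_p (h : 'cV[R]_n * R -> R) (p : 'cV[R]_n) (t : R) : 'rV[R]_n :=
  \row_i 'd h (p, t) (delta_mx i 0, 0).

Definition d_t (h : 'cV[R]_n * R -> R) (p : 'cV[R]_n) (t : R) : R :=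
  'd h (p, t) (0, 1).

Definition hdot (f : 'cV[R]_n -> 'cV[R]_n) (G : 'cV[R]_n -> 'M[R]_(n, m))
    (h : 'cV[R]_n * R -> R) (p : 'cV[R]_n) (t : R) (z : 'cV[R]_m) : R :=
  (grad_p h p t *m (f p + G p *m z)) 0 0 + d_t h p t.

Definition agent_model (f : 'cV[R]_n -> 'cV[R]_n)
    (G : 'cV[R]_n -> 'M[R]_(n, m)) : Prop :=
  [/\ locally_lipschitz f, locally_lipschitz G &
      forall p, \rank (G p) = n].

Definition cbf_candidate (h : 'cV[R]_n * R -> R) (t0 : R) (tf : \bar R) : Prop :=
  C1_on h (dom t0 tf) /\
  (forall p t, time_dom t0 tf t -> h (p, t) = 0 -> grad_p h p t != 0).

Definition safe_set (h : 'cV[R]_n * R -> R) (t : R) : set 'cV[R]_n :=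
  [set p | 0 <= h (p, t)].

Definition CBF_with (f : 'cV[R]_n -> 'cV[R]_n) (G : 'cV[R]_n -> 'M[R]_(n, m))
    (h : 'cV[R]_n * R -> R) (t0 : R) (tf : \bar R) (alpha : R -> R) : Prop :=
  cbf_candidate h t0 tf /\ ext_classKinf alpha /\
  exists D : R -> set 'cV[R]_n,
    (forall t, time_dom t0 tf t -> safe_set h t `<=` D t) /\
    (forall p t, time_dom t0 tf t -> D t p ->
       (- alpha (h (p, t)))%:E <
         ereal_sup [set (hdot f G h p t z)%:E | z in [set: 'cV[R]_m]])%E.

Definition is_CBF f G h t0 tf : Prop :=
  exists alpha, CBF_with f G h t0 tf alpha.

End Defs.

(* Take D(t) = C(t). At a point of the safe set where the spatial gradient is nonzero, full row
   rank of G makes grad_p h * G a nonzero row vector, so hdot is an affine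
   function of the input with nonzero slope and takes arbitrarily large values.
   Where the gradient vanishes, h is positive by the regularity of the
   boundary, so -alpha(h) < 0 <= dh/dt = hdot. Neither case uses any property
   of alpha beyond its sign, hence every extended class-K_inf alpha works. *)

From HB Require Import structures.
From mathcomp Require Import all_boot all_order all_algebra.
From mathcomp Require Import all_classical all_reals all_analysis.
Import Order.TTheory GRing.Theory Num.Theory.
Import numFieldNormedType.Exports.
Local Open Scope classical_set_scope.
Local Open Scope ring_scope.

Lemma rV_mulmx_surj (F : fieldType) (n : nat) (v : 'rV[F]_n) (c : F) :
  v != 0 -> exists z : 'cV[F]_n, (v *m z) 0 0 = c.
Proof.
move=> v_neq0.
have [j vj_neq0] : exists j, v 0 j != 0.
  apply/not_existsP => v_eq0; move/negP: v_neq0; apply; apply/eqP/matrixP => i k.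
  by rewrite (ord1 i) mxE; apply/eqP/negPn/negP/v_eq0.
exists ((c / v 0 j) *: delta_mx j 0).
by rewrite -scalemxAr -colE !mxE mulfVK.
Qed.

Section ExtClassKinf.
Variable R : realType.

Lemma ext_classKinf_id : ext_classKinf (@id R).
Proof. by split=> // x; apply: cvg_id. Qed.

Variable alpha : R -> R.
Hypothesis alpha_Kinf : ext_classKinf alpha.

Lemma ext_classKinf_gt0 x : 0 < x -> 0 < alpha x.
Proof. by case: alpha_Kinf => _ alpha_incr alpha0 _ _ /alpha_incr; rewrite alpha0. Qed.

End ExtClassKinf.

Section Hdot.
Variables (R : realType) (n m : nat).
Variables (f : 'cV[R]_n -> 'cV[R]_n) (G : 'cV[R]_n -> 'M[R]_(n, m)).
Variables (h : 'cV[R]_n * R -> R) (p : 'cV[R]_n) (t : R).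

Lemma hdotE (z : 'cV[R]_m) :
  hdot f G h p t z = hdot f G h p t 0 + (grad_p h p t *m G p *m z) 0 0.
Proof.
by rewrite /hdot mulmx0 addr0 mulmxDr mulmxA mxE addrAC.
Qed.

Lemma hdot_grad0 (z : 'cV[R]_m) : grad_p h p t = 0 -> hdot f G h p t z = d_t h p t.
Proof. by move=> grad0; rewrite /hdot grad0 mul0mx mxE add0r. Qed.

Lemma hdot_unbounded (b : R) :
  row_free (G p) -> grad_p h p t != 0 -> exists z, b < hdot f G h p t z.
Proof.
move=> G_free grad_neq0.
have [z zE] : exists z : 'cV[R]_m, (grad_p h p t *m G p *m z) 0 0 = b - hdot f G h p t 0 + 1.
  by apply: rV_mulmx_surj; rewrite mulmx_free_eq0.
by exists z; rewrite hdotE zE addrA addrCA subrr addr0 ltrDl ltr01.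
Qed.

End Hdot.

Lemma cbf_condition_pointwise (R : realType) (n m : nat)
    (f : 'cV[R]_n -> 'cV[R]_n) (G : 'cV[R]_n -> 'M[R]_(n, m))
    (h : 'cV[R]_n * R -> R) (alpha : R -> R) (p : 'cV[R]_n) (t : R) :
  row_free (G p) -> ext_classKinf alpha ->
  (h (p, t) = 0 -> grad_p h p t != 0) ->
  (grad_p h p t = 0 -> 0 < h (p, t) -> 0 <= d_t h p t) ->
  0 <= h (p, t) -> exists z, - alpha (h (p, t)) < hdot f G h p t z.
Proof.
move=> G_free alpha_Kinf boundary_regular dt_ge0 h_ge0.
have [grad0|grad_neq0] := eqVneq (grad_p h p t) 0; last exact: hdot_unbounded.
have h_gt0 : 0 < h (p, t).
  by rewrite lt_neqAle h_ge0 andbT; apply/eqP => /esym/boundary_regular; rewrite grad0 eqxx.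
exists 0; rewrite hdot_grad0 //.
by apply: lt_le_trans (dt_ge0 grad0 h_gt0); rewrite oppr_lt0 ext_classKinf_gt0.
Qed.

Theorem mainTheorem1 (R : realType) (n m : nat)
    (f : 'cV[R]_n -> 'cV[R]_n) (G : 'cV[R]_n -> 'M[R]_(n, m))
    (h : 'cV[R]_n * R -> R) (t0 : R) (tf : \bar R) :
  agent_model f G ->
  C1_on h (@dom R n t0 tf) ->
  (forall p t, time_dom t0 tf t -> h (p, t) = 0 -> grad_p h p t != 0) ->
  (forall p t, time_dom t0 tf t -> grad_p h p t = 0 -> 0 < h (p, t) ->
     0 <= d_t h p t) ->
  is_CBF f G h t0 tf /\
  (forall alpha : R -> R, ext_classKinf alpha -> CBF_with f G h t0 tf alpha).
Proof.
move=> [_ _ G_rank] h_C1 boundary_regular dt_ge0.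
have every_alpha alpha : ext_classKinf alpha -> CBF_with f G h t0 tf alpha.
  move=> alpha_Kinf; split; first by split.
  split=> //; exists (safe_set h); split=> [t _ //|p t t_dom h_ge0].
  have G_free : row_free (G p) by rewrite /row_free G_rank.
  have [z hdot_gt] := @cbf_condition_pointwise R n m f G h alpha p t G_free alpha_Kinf
    (boundary_regular p t t_dom) (dt_ge0 p t t_dom) h_ge0.
  apply: (lt_le_trans _ (ereal_sup_ubound _)); last by exists z.
  by rewrite lte_fin.
split=> //; exists id; exact/every_alpha/ext_classKinf_id.
Qed.
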